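(* Consider a Bayesian model with parameter $\theta$, prior $P(\theta)$, and data $\mathcal{D}=(\mathcal{D}_i)_{i=1}^n$ whose elements are conditionally independent given $\theta$ with likelihoods $P(\mathcal{D}_i\mid\theta)$. For each $i$, let $\theta^i_1,\dots,\theta^i_k$ be i.i.d. samples from the posterior $P(\theta\mid\mathcal{D}_{<i})$, and define $$\hat{\mathcal{L}}(\mathcal{D})=\sum_{i=1}^n\frac1k\sum_{j=1}^k\log P(\mathcal{D}_i\mid\theta^i_j),\qquad \hat{\mathcal{L}}_k(\mathcal{D})=\sum_{i=1}^n\log\frac1k\sum_{j=1}^kP(\mathcal{D}_i\mid\theta^i_j).$$ Let $\mathcal{L}(\mathcal{D})=\sum_{i=1}^n\mathbb{E}_{\theta\sim P(\theta\mid\mathcal{D}_{<i})}[\log P(\mathcal{D}_i\mid\theta)]$ and $\mathcal{L}_k(\mathcal{D})=\mathbb{E}[\hat{\mathcal{L}}_k(\mathcal{D})]$. Then $$\mathbb{E}[\hat{\mathcal{L}}(\mathcal{D})]=\mathcal{L}(\mathcal{D})\le\log P(\mathcal{D})\quad\text{and}\quad\mathbb{E}[\hat{\mathcal{L}}_k(\mathcal{D})]=\mathcal{L}_k(\mathcal{D})\le\log P(\mathcal{D}).$$ Further, $$\mathcal{L}(\mathcal{D})=\log P(\mathcal{D})-\sum_{i=1}^n\mathrm{KL}\big(P(\theta\mid\mathcal{D}_{<i})\,\|\,P(\theta\mid\mathcal{D}_{<i+1})\big).$$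
   Context: $\mathcal{D}_{<i}=(\mathcal{D}_j)_{j=1}^{i-1}$ with $\mathcal{D}_{<1}=\emptyset$. $P(\mathcal{D})=\int P(\mathcal{D}\mid\theta)P(\theta)d\theta$ is the marginal likelihood, so that $\log P(\mathcal{D})=\sum_i\log P(\mathcal{D}_i\mid\mathcal{D}_{<i})$ with $P(\mathcal{D}_i\mid\mathcal{D}_{<i})=\mathbb{E}_{\theta\sim P(\theta\mid\mathcal{D}_{<i})}P(\mathcal{D}_i\mid\theta)$. $\mathrm{KL}$ is the Kullback–Leibler divergence. *)

From HB Require Import structures.
From mathcomp Require Import all_boot all_order all_algebra.
From mathcomp Require Import all_classical all_reals all_analysis.
Set Implicit Arguments. Unset Strict Implicit. Unset Printing Implicit Defensive.
Import Order.TTheory GRing.Theory Num.Theory.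
Local Open Scope classical_set_scope.
Local Open Scope ring_scope.

Section BayesDefs.
Context {R : realType} {d : measure_display} {T : measurableType d}.

(* unnormalised posterior weight after observing D_{<i}:
   w i theta = prod_{j<i} P(D_j | theta)  (conditional independence) *)
Definition lik_prod (l : nat -> T -> R) (i : nat) (x : T) : R :=
  \prod_(j < i) l j x.

Definition marg (P : probability T R) (l : nat -> T -> R) (i : nat) : \bar R :=
  (\int[P]_x (lik_prod l i x)%:E)%E.

(* density of the posterior P(theta | D_{<i}) w.r.t. the prior (Bayes' rule) *)
Definition post_dens (P : probability T R) (l : nat -> T -> R) (i : nat) (x : T) : R :=
  lik_prod l i x / fine (marg P l i).

Definition KL_dens (mu : {measure set T -> \bar R}) (p q : T -> R) : \bar R :=
  (\int[mu]_x (p x * ln (p x / q x))%:E)%E.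

Definition Lcal (P : probability T R) (l : nat -> T -> R) (n : nat) : \bar R :=
  (\sum_(i < n) \int[P]_x (post_dens P l i x * ln (l i x))%:E)%E.
End BayesDefs.

Definition mutually_independent {R : realType} {d d' : measure_display}
  {Om : measurableType d'} {T : measurableType d} {I : eqType}
  (Q : probability Om R) (S : set I) (X : I -> Om -> T) : Prop :=
  forall (s : seq I) (A : I -> set T),
    uniq s -> (forall x, x \in s -> S x) -> (forall x, measurable (A x)) ->
    Q (\bigcap_(x in [set x | x \in s]) (X x @^-1` A x)) =
    (\prod_(x <- s) Q (X x @^-1` A x))%E.

Definition Lhat {R : realType} {d : measure_display} {T : measurableType d} {Om : Type}
  (l : nat -> T -> R) (n k : nat) (th : nat -> nat -> Om -> T) (w : Om) : R :=
  \sum_(i < n) (k%:R^-1 * \sum_(j < k) ln (l i (th i j w))).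

Definition Lhat_k {R : realType} {d : measure_display} {T : measurableType d} {Om : Type}
  (l : nat -> T -> R) (n k : nat) (th : nat -> nat -> Om -> T) (w : Om) : R :=
  \sum_(i < n) ln (k%:R^-1 * \sum_(j < k) l i (th i j w)).

From HB Require Import structures.
From mathcomp Require Import all_boot all_order all_algebra.
From mathcomp Require Import all_classical all_reals all_analysis.
From mathcomp Require Import measurable_realfun ring.
Import Order.TTheory GRing.Theory Num.Theory.
Local Open Scope classical_set_scope.
Local Open Scope ring_scope.

(* Write c_i = P(D_{<i+1}) / P(D_{<i}) = P(D_i | D_{<i}); then log P(D) is the
   telescoping sum of the log c_i. Bayes' rule turns the ratio of consecutive
   posterior densities into c_i / P(D_i | theta), so KL(p_i || p_{i+1}) is
   log c_i - E_{p_i}[log P(D_i | theta)], which gives the decomposition of L.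
   Both upper bounds are Jensen's inequality for log in its tangent-line form
   log y <= log c + y / c - 1, integrated against a law under which y has mean
   c: the posterior p_i for L, and the law of the samples for L_k, under which
   the sample mean of the P(D_i | theta^i_j) has mean c_i. *)

Section integral_density.
Context {d : measure_display} {T : measurableType d} {R : realType}.
Context {mu : {sigma_finite_measure set T -> \bar R}}
  {nu : {finite_measure set T -> \bar R}} {g : T -> R}.
Hypotheses (mg : measurable_fun setT g) (g_ge0 : forall x, 0 <= g x)
  (nuE : forall A, measurable A -> nu A = (\int[mu]_(x in A) (g x)%:E)%E).
Local Open Scope ereal_scope.

Lemma ge0_integral_density (f : T -> \bar R) :
    (forall x, 0 <= f x) -> measurable_fun setT f ->
  \int[mu]_x (f x * (g x)%:E) = \int[nu]_x f x.
Proof.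
move=> f0 mf.
have mEg : measurable_fun setT (EFin \o g) by exact/measurable_EFinP.
have numu : nu `<< mu.
  apply/null_content_dominatesP => A mA muA0; rewrite nuE //.
  by apply: null_set_integral => //; exact: measurable_funTS.
have gE : ae_eq mu setT (EFin \o g) (Radon_Nikodym_SigmaFinite.f nu mu).
  apply/ae_eq_sym/integral_ae_eq => //.
  - exact: Radon_Nikodym_SigmaFinite.f_integrable.
  - by move=> E _ mE; rewrite -Radon_Nikodym_SigmaFinite.f_integral // nuE.
rewrite -(Radon_Nikodym_SigmaFinite.change_of_variables numu) //.
apply: ae_eq_integral => //; [exact: emeasurable_funM|..|exact: ae_eqe_mul2l].
apply: emeasurable_funM => //; apply: measurable_int.
exact: Radon_Nikodym_SigmaFinite.f_integrable.
Qed.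
End integral_density.

Section law.
Context {d d' : measure_display} {T : measurableType d} {Om : measurableType d'}.
Context {R : realType} {Q : probability Om R} {P : probability T R}.
Context {phi : Om -> T} {g : T -> R}.
Hypotheses (mphi : measurable_fun setT phi) (mg : measurable_fun setT g)
  (g_ge0 : forall x, 0 <= g x)
  (phiE : forall A, measurable A ->
     Q (phi @^-1` A) = (\int[P]_(x in A) (g x)%:E)%E).
Local Open Scope ereal_scope.

Let X : {mfun Om >-> T} := HB.pack phi (isMeasurableFun.Build _ _ _ _ _ mphi).

Lemma ge0_integral_law (f : T -> \bar R) :
    (forall x, 0 <= f x) -> measurable_fun setT f ->
  \int[Q]_w f (phi w) = \int[P]_x (f x * (g x)%:E).
Proof.
move=> f0 mf.
rewrite (ge0_integral_density (nu := distribution Q X)) //.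
by rewrite ge0_integral_distribution.
Qed.

Lemma integrable_law (h : T -> R) : measurable_fun setT h ->
    P.-integrable setT (fun x => (g x * h x)%:E) ->
  Q.-integrable setT (fun w => (h (phi w))%:E).
Proof.
move=> mh /integrableP[_ gh_fin]; apply/integrableP; split.
  by apply/measurable_EFinP; exact: measurableT_comp.
rewrite (ge0_integral_law (fun x => `|(h x)%:E|)) //; last first.
  by apply: measurableT_comp => //; exact/measurable_EFinP.
have g_absE x : (g x)%:E = `|(g x)%:E| by rewrite gee0_abs ?lee_fin.
by under eq_integral => x _ do rewrite g_absE -abseM muleC -EFinM.
Qed.

Lemma integral_law (h : T -> R) : measurable_fun setT h ->
  \int[Q]_w (h (phi w))%:E = \int[P]_x (g x * h x)%:E.
Proof.
move=> mh.
have mEh : measurable_fun setT (EFin \o h) by exact/measurable_EFinP.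
(* No integrability is needed: both sides are, by definition, the difference
   of the integrals of the positive and negative parts. *)
rewrite integralE [RHS]integralE; congr (_ - _).
- transitivity (\int[Q]_w (EFin \o h)^\+ (phi w)).
    by apply: eq_integral => w _; rewrite !funeposE.
  rewrite ge0_integral_law //; last exact: measurable_funepos.
  apply: eq_integral => x _.
  by rewrite !funeposE /= maxe_pMl ?lee_fin // mul0e -EFinM mulrC.
- transitivity (\int[Q]_w (EFin \o h)^\- (phi w)).
    by apply: eq_integral => w _; rewrite !funenegE.
  rewrite ge0_integral_law //; last exact: measurable_funeneg.
  apply: eq_integral => x _.
  by rewrite !funenegE /= maxe_pMl ?lee_fin // mul0e -EFinM mulrC mulrN.
Qed.
End law.

Definition ln_tangent {R : realType} (c y : R) : R := ln c - 1 + y / c.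

Lemma ln_le_tangent (R : realType) (c y : R) :
  0 < c -> 0 < y -> ln y <= ln_tangent c y.
Proof.
move=> c_gt0 y_gt0; rewrite /ln_tangent addrAC.
have yE : y = c * (y / c) by rewrite mulrCA divff ?mulr1 // gt_eqF.
rewrite [in leLHS]yE lnM ?posrE ?divr_gt0 // -addrA lerD2l.
have := @le_ln1Dx _ (y / c - 1); rewrite addrCA subrr addr0; apply.
by rewrite ltrBrDl subrr divr_gt0.
Qed.

Section integral_ln.
Context d (T : measurableType d) (R : realType).
Variable mu : {measure set T -> \bar R}.
Local Open Scope ereal_scope.

Lemma ge0_integrable_EFin (f : T -> R) : measurable_fun setT f ->
  (forall x, 0 <= f x)%R -> \int[mu]_x (f x)%:E < +oo ->
  mu.-integrable setT (EFin \o f).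
Proof.
move=> mf f_ge0 f_fin; apply/integrableP; split; first exact/measurable_EFinP.
by under eq_integral => x _ do rewrite gee0_abs ?lee_fin //.
Qed.

Lemma le_integral_measurable (f g : T -> \bar R) :
  measurable_fun setT f -> mu.-integrable setT g -> (forall x, f x <= g x) ->
  \int[mu]_x f x <= \int[mu]_x g x.
Proof.
move=> mf /integrableP[mg _] fg.
rewrite integralE [leRHS]integralE; apply: leeB.
- apply: ge0_le_integral; rewrite //; [exact: measurable_funepos..|].
  by move=> x _; apply: (funepos_le (in1W fg)); exact: in_setT.
- apply: ge0_le_integral; rewrite //; [exact: measurable_funeneg..|].
  by move=> x _; apply: (funeneg_le (in1W fg)); exact: in_setT.
Qed.

Variables (p X : T -> R) (c : R).
Hypotheses (mp : measurable_fun setT p) (mX : measurable_fun setT X)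
  (p_ge0 : forall x, (0 <= p x)%R) (X_gt0 : forall x, (0 < X x)%R) (c_gt0 : (0 < c)%R)
  (int_p : \int[mu]_x (p x)%:E = 1) (int_pX : \int[mu]_x (p x * X x)%:E = c%:E).

Let ip : mu.-integrable setT (EFin \o p).
Proof. by apply: ge0_integrable_EFin => //; rewrite int_p ltry. Qed.

Let ipX : mu.-integrable setT (fun x => (p x * X x)%:E).
Proof.
apply: ge0_integrable_EFin; first exact: measurable_funM.
  by move=> x; rewrite mulr_ge0 // ltW.
by rewrite int_pX ltry.
Qed.

Let tangentE x : (p x * ln_tangent c (X x))%:E =
  (ln c - 1)%:E * (p x)%:E + c^-1%:E * (p x * X x)%:E.
Proof. by rewrite -!EFinM -EFinD /ln_tangent; congr EFin; ring. Qed.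

Lemma integrable_ln_tangent :
  mu.-integrable setT (fun x => (p x * ln_tangent c (X x))%:E).
Proof.
under eq_fun do rewrite tangentE.
by apply: integrableD => //; exact: integrableZl.
Qed.

Lemma integral_ln_tangent :
  \int[mu]_x (p x * ln_tangent c (X x))%:E = (ln c)%:E.
Proof.
under eq_integral do rewrite tangentE.
rewrite integralD //; [|exact: integrableZl..].
rewrite !integralZl // int_p int_pX mule1 -EFinM -EFinD mulVf ?gt_eqF //.
by rewrite subrK.
Qed.

Lemma integral_ln_le : \int[mu]_x (p x * ln (X x))%:E <= (ln c)%:E.
Proof.
rewrite -integral_ln_tangent; apply: le_integral_measurable.
- apply/measurable_EFinP/measurable_funM => //.
  exact: measurableT_comp (@measurable_ln R) mX.
- exact: integrable_ln_tangent.
- by move=> x; rewrite lee_fin ler_wpM2l // ln_le_tangent.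
Qed.

End integral_ln.

Definition predictive {R : realType} {d} {T : measurableType d}
    (P : probability T R) (l : nat -> T -> R) (i : nat) : R :=
  fine (marg P l i.+1) / fine (marg P l i).

Definition sample_mean {R : realType} {T Om : Type}
    (k : nat) (th : nat -> Om -> T) (h : T -> R) (w : Om) : R :=
  k%:R^-1 * \sum_(j < k) h (th j w).

Section bayes.
Context {R : realType} {d : measure_display} {T : measurableType d}.
Variables (P : probability T R) (l : nat -> T -> R).
Hypotheses (ml : forall i, measurable_fun setT (l i)) (l_gt0 : forall i x, 0 < l i x).
Local Open Scope ereal_scope.

Lemma lik_prod_gt0 i x : (0 < lik_prod l i x)%R.
Proof. by apply: prodr_gt0 => j _; exact: l_gt0. Qed.

Lemma measurable_lik_prod i : measurable_fun setT (lik_prod l i).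
Proof. by apply: measurable_prod => j _; exact: ml. Qed.

Lemma lik_prodS i x : lik_prod l i.+1 x = (lik_prod l i x * l i x)%R.
Proof. by rewrite /lik_prod big_ord_recr. Qed.

Lemma marg0 : marg P l 0 = 1.
Proof.
rewrite /marg /lik_prod; under eq_integral do rewrite big_ord0.
by rewrite integral_cst // mul1e; exact: probability_setT.
Qed.

Lemma marg_gt0 i : 0 < marg P l i.
Proof.
have lik_ge0 x : 0 <= (lik_prod l i x)%:E by rewrite lee_fin ltW // lik_prod_gt0.
rewrite lt0e integral_ge0 ?andbT //; apply/eqP => marg_eq0.
have [N [mN PN0 lik_neq0_N]] : ae_eq P setT (fun x => (lik_prod l i x)%:E) (cst 0).
  apply/ae_eq_integral_abs => //; first exact/measurable_EFinP/measurable_lik_prod.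
  by under eq_integral do rewrite gee0_abs //.
have : P setT <= P N.
  apply: le_measure; rewrite ?inE // => x _; apply: lik_neq0_N => /(_ I) /eqP.
  by rewrite eqe gt_eqF // lik_prod_gt0.
by rewrite PN0 probability_setT lee_fin ler10.
Qed.

Lemma post_dens_ge0 i x : (0 <= post_dens P l i x)%R.
Proof. by rewrite divr_ge0 ?fine_ge0 ?ltW ?lik_prod_gt0 ?marg_gt0. Qed.

Lemma measurable_post_dens i : measurable_fun setT (post_dens P l i).
Proof. by apply: measurable_funM => //; exact: measurable_lik_prod. Qed.

Lemma post_dens_lik i x :
  (post_dens P l i x * l i x = lik_prod l i.+1 x / fine (marg P l i))%R.
Proof. by rewrite /post_dens lik_prodS mulrAC. Qed.

Variable n : nat.
Hypothesis marg_lty : forall i, (i <= n)%N -> marg P l i < +oo.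

Lemma marg_fin_num i : (i <= n)%N -> marg P l i \is a fin_num.
Proof. by move=> le_in; rewrite ge0_fin_numE ?marg_lty // ltW ?marg_gt0. Qed.

Lemma fine_marg_gt0 i : (i <= n)%N -> (0 < fine (marg P l i))%R.
Proof. by move=> le_in; rewrite fine_gt0 // marg_gt0 marg_lty. Qed.

Lemma integral_post_dens i : (i <= n)%N -> \int[P]_x (post_dens P l i x)%:E = 1.
Proof.
move=> le_in; under eq_integral do rewrite EFinM.
rewrite ge0_integralZr //; last 3 first.
- exact/measurable_EFinP/measurable_lik_prod.
- by move=> x _; rewrite lee_fin ltW // lik_prod_gt0.
- by rewrite lee_fin invr_ge0 ltW // fine_marg_gt0.
rewrite -/(marg P l i) -[marg P l i]fineK ?marg_fin_num // -EFinM mulfV //.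
by rewrite gt_eqF // fine_marg_gt0.
Qed.

Lemma integral_post_dens_lik i : (i < n)%N ->
  \int[P]_x (post_dens P l i x * l i x)%:E = (predictive P l i)%:E.
Proof.
move=> lt_in; under eq_integral do rewrite post_dens_lik EFinM.
rewrite ge0_integralZr //; last 3 first.
- exact/measurable_EFinP/measurable_lik_prod.
- by move=> x _; rewrite lee_fin ltW // lik_prod_gt0.
- by rewrite lee_fin invr_ge0 ltW // fine_marg_gt0 // ltnW.
by rewrite -/(marg P l i.+1) -[marg P l i.+1]fineK ?marg_fin_num // -EFinM.
Qed.

Lemma predictive_gt0 i : (i < n)%N -> (0 < predictive P l i)%R.
Proof. by move=> lt_in; rewrite divr_gt0 // fine_marg_gt0 // ltnW. Qed.

Lemma sum_ln_predictive :
  (\sum_(i < n) ln (predictive P l i) = ln (fine (marg P l n)))%R.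
Proof.
pose L i := ln (fine (marg P l i)).
transitivity (\sum_(0 <= i < n) (L i.+1 - L i))%R.
  rewrite big_mkord; apply: eq_bigr => i _.
  by rewrite ln_div ?posrE ?fine_marg_gt0 // ltnW.
by rewrite telescope_sumr // /L marg0 ln1 subr0.
Qed.

Lemma post_dens_ratio i x : (i < n)%N ->
  (post_dens P l i x / post_dens P l i.+1 x = predictive P l i / l i x)%R.
Proof.
move=> lt_in; rewrite /post_dens /predictive lik_prodS.
have := lik_prod_gt0 i x; have := l_gt0 i x.
have := fine_marg_gt0 _ (ltnW lt_in); have := fine_marg_gt0 _ lt_in.
by move=> *; field; rewrite !gt_eqF.
Qed.

Lemma expected_log_lik_le i : (i < n)%N ->
  \int[P]_x (post_dens P l i x * ln (l i x))%:E <= (ln (predictive P l i))%:E.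
Proof.
move=> lt_in; apply: integral_ln_le.
- exact: measurable_post_dens.
- exact: ml.
- exact: post_dens_ge0.
- exact: l_gt0.
- exact: predictive_gt0.
- exact/integral_post_dens/ltnW.
- exact: integral_post_dens_lik.
Qed.

Lemma KL_post_dens i : (i < n)%N ->
    P.-integrable setT (fun x => (post_dens P l i x * ln (l i x))%:E) ->
  KL_dens P (post_dens P l i) (post_dens P l i.+1) =
  (ln (predictive P l i))%:E - \int[P]_x (post_dens P l i x * ln (l i x))%:E.
Proof.
move=> lt_in int_pln.
have ip : P.-integrable setT (EFin \o post_dens P l i).
  apply: ge0_integrable_EFin; [exact: measurable_post_dens|exact: post_dens_ge0|].
  by rewrite integral_post_dens ?ltry // ltnW.
rewrite /KL_dens; under eq_integral => x _.
  rewrite post_dens_ratio // ln_div ?posrE ?predictive_gt0 // mulrBr EFinB EFinM.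
  over.
rewrite integralB //; last exact: integrableZr.
by rewrite integralZr // integral_post_dens ?mul1e //; exact: ltnW.
Qed.

Lemma Lcal_le_ln_marg : Lcal P l n <= (ln (fine (marg P l n)))%:E.
Proof.
rewrite /Lcal -sum_ln_predictive -sumEFin.
by apply: lee_sum => i _; exact: expected_log_lik_le.
Qed.

Lemma Lcal_ln_marg_sub_KL :
    (forall i, (i < n)%N ->
       P.-integrable setT (fun x => (post_dens P l i x * ln (l i x))%:E)) ->
  Lcal P l n = (ln (fine (marg P l n)))%:E -
    \sum_(i < n) KL_dens P (post_dens P l i) (post_dens P l i.+1).
Proof.
move=> int_pln.
pose a (i : 'I_n) := fine (\int[P]_x (post_dens P l i x * ln (l i x))%:E).
have aE (i : 'I_n) : \int[P]_x (post_dens P l i x * ln (l i x))%:E = (a i)%:E.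
  by rewrite fineK //; exact/integrable_fin_num/int_pln.
rewrite /Lcal -sum_ln_predictive.
rewrite (eq_bigr (fun i => (a i)%:E)); last by move=> i _; exact: aE.
rewrite [X in _ - X](eq_bigr (fun i : 'I_n => (ln (predictive P l i) - a i)%:E)).
  by rewrite !sumEFin -EFinB sumrB opprB addrCA subrr addr0.
by move=> i _; rewrite KL_post_dens ?aE //; exact: int_pln.
Qed.

Variables (d' : measure_display) (Om : measurableType d') (Q : probability Om R).
Variables (k : nat) (th : nat -> nat -> Om -> T).
Hypotheses (k_gt0 : (0 < k)%N) (mth : forall i j, measurable_fun setT (th i j))
  (th_law : forall i j A, (i < n)%N -> (j < k)%N -> measurable A ->
     Q (th i j @^-1` A) = \int[P]_(x in A) (post_dens P l i x)%:E).

Lemma measurable_sample_mean i {h : T -> R} : measurable_fun setT h ->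
  measurable_fun setT (sample_mean k (th i) h).
Proof.
move=> mh; apply: measurable_funM => //; apply: measurable_sum => j.
exact: measurableT_comp.
Qed.

Lemma sample_mean_gt0 i {h : T -> R} w : (forall x, 0 < h x)%R ->
  (0 < sample_mean k (th i) h w)%R.
Proof.
move=> h_gt0; rewrite mulr_gt0 ?invr_gt0 ?ltr0n // -(prednK k_gt0) big_ord_recl.
rewrite ltr_pwDl ?h_gt0 //; apply: sumr_ge0 => j _; exact/ltW/h_gt0.
Qed.

Section sample.
Variables (i : nat) (h : T -> R).
Hypotheses (lt_in : (i < n)%N) (mh : measurable_fun setT h)
  (int_ph : P.-integrable setT (fun x => (post_dens P l i x * h x)%:E)).

Let integrable_sample (j : 'I_k) : Q.-integrable setT (fun w => (h (th i j w))%:E).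
Proof.
apply: (integrable_law (g := post_dens P l i)) => //.
- exact: measurable_post_dens.
- exact: post_dens_ge0.
- by move=> A mA; exact: th_law.
- exact: int_ph.
Qed.

Let integral_sample (j : 'I_k) :
  \int[Q]_w (h (th i j w))%:E = \int[P]_x (post_dens P l i x * h x)%:E.
Proof.
apply: (integral_law (g := post_dens P l i)) => //.
- exact: measurable_post_dens.
- exact: post_dens_ge0.
- by move=> A mA; exact: th_law.
Qed.

Let sample_meanE w : (sample_mean k (th i) h w)%:E =
  k%:R^-1%:E * \sum_(j < k) (h (th i j w))%:E.
Proof. by rewrite sumEFin -EFinM. Qed.

Lemma integrable_sample_mean :
  Q.-integrable setT (fun w => (sample_mean k (th i) h w)%:E).
Proof.
under eq_fun do rewrite sample_meanE.
by apply/integrableZl/integrable_sum => // j _; exact: integrable_sample.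
Qed.

Lemma integral_sample_mean : \int[Q]_w (sample_mean k (th i) h w)%:E =
  \int[P]_x (post_dens P l i x * h x)%:E.
Proof.
under eq_integral do rewrite sample_meanE.
rewrite integralZl //; last first.
  by apply: integrable_sum => // j _; exact: integrable_sample.
rewrite integral_sum //.
set I := \int[P]_x _.
have I_fin : I \is a fin_num by exact: integrable_fin_num.
rewrite (eq_bigr (fun=> (fine I)%:E)); last first.
  by move=> j _; rewrite integral_sample fineK.
rewrite sumEFin sumr_const card_ord -EFinM -[X in (_ * X)%R]mulr_natl.
by rewrite mulKf ?fineK // pnatr_eq0 -lt0n.
Qed.
End sample.

Lemma expectation_Lhat :
    (forall i, (i < n)%N ->
       P.-integrable setT (fun x => (post_dens P l i x * ln (l i x))%:E)) ->
  \int[Q]_w (Lhat l n k th w)%:E = Lcal P l n.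
Proof.
move=> int_pln.
have mlnl i : measurable_fun setT (fun x => ln (l i x)).
  exact: measurableT_comp (@measurable_ln R) (ml i).
rewrite /Lhat /Lcal; under eq_integral do rewrite -sumEFin.
rewrite integral_sum //; last first.
  move=> i; apply: (integrable_sample_mean _ _ (ltn_ord i) (mlnl i)).
  exact: int_pln.
apply: eq_bigr => i _.
by apply: (integral_sample_mean _ _ (ltn_ord i) (mlnl i)); exact: int_pln.
Qed.

Section tangent.
Variable i : nat.
Hypothesis lt_in : (i < n)%N.

(* Q is used with the constant density 1 in the tangent-line lemmas. *)
Let int1 : \int[Q]_w (1%R)%:E = 1.
Proof. by rewrite integral_cst // mul1e; exact: probability_setT. Qed.

Let int_pl : P.-integrable setT (fun x => (post_dens P l i x * l i x)%:E).
Proof.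
apply: ge0_integrable_EFin.
- exact/measurable_funM/ml/measurable_post_dens.
- by move=> x; rewrite mulr_ge0 ?post_dens_ge0 // ltW.
- by rewrite integral_post_dens_lik ?ltry.
Qed.

Let int_sample_mean :
  \int[Q]_w (1 * sample_mean k (th i) (l i) w)%:E = (predictive P l i)%:E.
Proof.
under eq_integral do rewrite mul1r.
by rewrite integral_sample_mean // integral_post_dens_lik.
Qed.

Let mX := measurable_sample_mean i (ml i).
Let X_gt0 w := sample_mean_gt0 i w (l_gt0 i).
Let c_gt0 := predictive_gt0 i lt_in.

Lemma integrable_ln_tangent_sample_mean : Q.-integrable setT
  (fun w => (ln_tangent (predictive P l i) (sample_mean k (th i) (l i) w))%:E).
Proof.
under eq_fun do rewrite -[ln_tangent _ _]mul1r.
exact: integrable_ln_tangent.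
Qed.

Lemma integral_ln_tangent_sample_mean :
  \int[Q]_w (ln_tangent (predictive P l i) (sample_mean k (th i) (l i) w))%:E =
  (ln (predictive P l i))%:E.
Proof.
under eq_integral do rewrite -[ln_tangent _ _]mul1r.
exact: integral_ln_tangent.
Qed.
End tangent.

Lemma expectation_Lhat_k_le :
  \int[Q]_w (Lhat_k l n k th w)%:E <= (ln (fine (marg P l n)))%:E.
Proof.
pose B w := (\sum_(i < n)
  ln_tangent (predictive P l i) (sample_mean k (th i) (l i) w))%R.
have intB : \int[Q]_w (B w)%:E = (\sum_(i < n) ln (predictive P l i))%:E.
  rewrite -sumEFin /B; under eq_integral do rewrite -sumEFin.
  rewrite integral_sum //; last first.
    by move=> i; exact: integrable_ln_tangent_sample_mean.
  by apply: eq_bigr => i _; exact: integral_ln_tangent_sample_mean.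
rewrite -sum_ln_predictive -intB; apply: le_integral_measurable.
- apply/measurable_EFinP/measurable_sum => i.
  exact/(measurableT_comp (@measurable_ln R))/measurable_sample_mean.
- rewrite /B; under eq_fun do rewrite -sumEFin.
  by apply: integrable_sum => // i _; exact: integrable_ln_tangent_sample_mean.
- move=> w; rewrite lee_fin; apply: ler_sum => i _.
  by apply: ln_le_tangent; [exact: predictive_gt0 | exact: sample_mean_gt0].
Qed.

End bayes.

Theorem proposition4p1 (R : realType) (d d' : measure_display)
  (T : measurableType d) (Om : measurableType d')
  (P : probability T R)                 (* prior P(theta) *)
  (n k : nat) (l : nat -> T -> R)       (* l i theta = P(D_i | theta) *)
  (Q : probability Om R)                (* probability space of the sampler *)
  (th : nat -> nat -> Om -> T) :        (* th i j = theta^i_j *)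
  (0 < k)%N ->
  (forall i, measurable_fun setT (l i)) ->
  (forall i x, 0 < l i x) ->
  (forall i, (i <= n)%N -> (marg P l i < +oo)%E) ->
  (forall i, (i < n)%N ->
     P.-integrable setT (fun x => (post_dens P l i x * ln (l i x))%:E)) ->
  (forall i j, measurable_fun setT (th i j)) ->
  (* theta^i_j ~ P(theta | D_{<i}) *)
  (forall i j A, (i < n)%N -> (j < k)%N -> measurable A ->
     Q (th i j @^-1` A) = (\int[P]_(x in A) (post_dens P l i x)%:E)%E) ->
  (* all the samples are mutually independent *)
  mutually_independent Q [set ij | (ij.1 < n)%N /\ (ij.2 < k)%N]
    (fun ij : nat * nat => th ij.1 ij.2) ->
  let logPD := ln (fine (marg P l n)) in
  [/\ (\int[Q]_w (Lhat l n k th w)%:E)%E = Lcal P l n,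
      (Lcal P l n <= logPD%:E)%E,
      (\int[Q]_w (Lhat_k l n k th w)%:E <= logPD%:E)%E &
      Lcal P l n =
        (logPD%:E - \sum_(i < n) KL_dens P (post_dens P l i) (post_dens P l i.+1))%E].
Proof.
move=> k_gt0 ml l_gt0 marg_lty int_pln mth th_law _ logPD; rewrite /logPD.
split.
- exact: expectation_Lhat.
- exact: Lcal_le_ln_marg.
- exact: expectation_Lhat_k_le.
- exact: Lcal_ln_marg_sub_KL.
Qed.
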